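(* For $m\in\mathbb{Z}$ let $(\mathbf 1-\mathbf x)^{(\star m)}$ denote the $m$-fold convolution $(\mathbf 1-\mathbf x)\star\cdots\star(\mathbf 1-\mathbf x)$ if $m\ge0$ (the empty convolution being $\mathbf 1$), and the $(-m)$-fold convolution $q\star\cdots\star q$ of the $\star$-inverse $q$ of $\mathbf 1-\mathbf x$ if $m<0$. Then the map $\mathbb{Z}\to C(\mathbb{Z}_p,\mathbb{C}_p)$, $m\mapsto(\mathbf 1-\mathbf x)^{(\star m)}$, has a unique extension to a continuous map $\mathbb{Z}_p\to C(\mathbb{Z}_p,\mathbb{C}_p)$, and this extension is $y\mapsto S^y(\mathbf 1)$.
   Context: Fix a prime $p$. $\mathbb{C}_p$ denotes the completion of an algebraic closure of $\mathbb{Q}_p$, with absolute value $|\cdot|$ normalized by $|p|=1/p$. $C(\mathbb{Z}_p,\mathbb{C}_p)$ is the $\mathbb{C}_p$-Banach space of continuous functions $\mathbb{Z}_p\to\mathbb{C}_p$ with the sup-norm. For $n\in\mathbb{Z}_{\ge0}$ and $x\in\mathbb{Z}_p$, $\binom{x}{n}=x(x-1)\cdots(x-n+1)/n!$. For $\phi$ let $(\nabla\phi)(x)=\phi(x+1)-\phi(x)$; every $\phi$ has Mahler expansion $\phi(x)=\sum_{n\ge0}(\nabla^n\phi)(0)\binom xn$. Define $P(\phi)=\sum_{n\ge0}(\nabla^n\phi)(0)\,t^n/n!$. The convolution $\phi\star\psi$ is the continuous function with Mahler coefficients $(\nabla^n(\phi\star\psi))(0)=\sum_{k=0}^n\binom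 nk(\nabla^k\phi)(0)(\nabla^{n-k}\psi)(0)$, so $P(\phi\star\psi)=P(\phi)P(\psi)$; $\mathbf 1$ is the constant function $1$ (the unit for $\star$) and $\mathbf x$ is $x\mapsto x$, so $P(\mathbf 1-\mathbf x)=1-t$ and $\mathbf 1-\mathbf x$ is $\star$-invertible. For $y\in\mathbb{Z}_p$, $S^y(\phi)(x)=\sum_{k\ge0}(-1)^k k!\binom yk\binom xk\phi(x-k)$. *)

From Stdlib Require ClassicalEpsilon.
From mathcomp Require Import all_boot all_order all_algebra.
From mathcomp Require Import reals.
Set Implicit Arguments. Unset Strict Implicit. Unset Printing Implicit Defensive.
Import Order.TTheory GRing.Theory Num.Theory.
Local Open Scope ring_scope.

Section PadicDefs.
Variables (R : realType) (K : fieldType) (v : K -> R).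

Definition is_abs : Prop :=
  [/\ forall x, 0 <= v x, forall x, v x = 0 <-> x = 0 &
      forall x y, v (x * y) = v x * v y].
Definition nonarch : Prop := forall x y, v (x + y) <= Num.max (v x) (v y).
Definition cauchy (a : nat -> K) : Prop :=
  forall e, 0 < e -> exists N, forall m n, (N <= m)%N -> (N <= n)%N -> v (a m - a n) < e.
Definition cvg_to (a : nat -> K) (l : K) : Prop :=
  forall e, 0 < e -> exists N, forall n, (N <= n)%N -> v (a n - l) < e.
Definition complete : Prop := forall a, cauchy a -> exists l, cvg_to a l.
Definition alg_dense : Prop :=
  forall x e, 0 < e -> exists y,
    (exists P : {poly rat}, P != 0 /\ root (map_poly ratr P) y) /\ v (x - y) < e.

(* Z_p realized as the closure of Z inside K *)
Definition isZp (x : K) : Prop :=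
  forall e, 0 < e -> exists z : int, v (x - z%:~R) < e.

Definition has_sum (a : nat -> K) (s : K) : Prop :=
  cvg_to (fun n => \sum_(k < n) a k) s.
Definition ksum (a : nat -> K) : K := ClassicalEpsilon.epsilon (inhabits 0) (fun s => has_sum a s).

Definition binom (x : K) (n : nat) : K :=
  (\prod_(i < n) (x - i%:R)) / n`!%:R.

(* functions Z_p -> K are represented by functions K -> K, only their
   values on Z_p matter *)
Definition contZp (f : K -> K) : Prop :=
  forall x e, isZp x -> 0 < e -> exists2 d, 0 < d &
    forall y, isZp y -> v (y - x) < d -> v (f y - f x) < e.
(* continuity of a map Z_p -> C(Z_p, K) for the sup norm *)
Definition contmap (F : K -> K -> K) : Prop :=
  forall y0 e, isZp y0 -> 0 < e -> exists2 d, 0 < d &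
    forall y, isZp y -> v (y - y0) < d ->
      forall x, isZp x -> v (F y x - F y0 x) <= e.

Definition mcoef (phi : K -> K) (n : nat) : K :=
  \sum_(k < n.+1) (-1) ^+ (n - k) * 'C(n, k)%:R * phi k%:R.
Definition mahler_fun (c : nat -> K) (x : K) : K := ksum (fun n => c n * binom x n).
Definition conv (phi psi : K -> K) : K -> K :=
  mahler_fun (fun n => \sum_(k < n.+1) 'C(n, k)%:R * mcoef phi k * mcoef psi (n - k)).

Definition cst_one : K -> K := fun _ => 1.
Definition id_fun : K -> K := fun x => x.
Definition one_minus_x : K -> K := fun x => cst_one x - id_fun x.

Definition star_inv (phi : K -> K) : K -> K :=
  ClassicalEpsilon.epsilon (inhabits cst_one)
    (fun psi => contZp psi /\ forall x, isZp x -> conv phi psi x = cst_one x).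

Definition star_pow (phi : K -> K) (m : int) : K -> K :=
  match m with
  | Posz n => iter n (conv phi) cst_one
  | Negz n => iter n.+1 (conv (star_inv phi)) cst_one
  end.

Definition S_term (y : K) (phi : K -> K) (x : K) (k : nat) : K :=
  (-1) ^+ k * k`!%:R * binom y k * binom x k * phi (x - k%:R).
Definition Sop (y : K) (phi : K -> K) (x : K) : K := ksum (S_term y phi x).

End PadicDefs.

(* Everything is read off Mahler coefficients. The k-th Mahler coefficient of
   S^y(1) is (-1)^k k! binom(y, k), i.e. P(S^y(1)) = (1 - t)^y. Pascal's rule gives
   (1 - x) ⋆ S^y(1) = S^(y+1)(1) coefficientwise, and an alternating binomial sum
   gives q ⋆ S^y(1) = S^(y-1)(1) once the star-inverse q is known to have the
   coefficients of S^(-1)(1); so S^m(1) is the m-th convolution power of 1 - x for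
   every integer m. As |k!| -> 0 and |binom(y, k)| <= 1 on Z_p, the series for
   S^y(1)(x) converges and |S^y(1)(x) - S^y'(1)(x)| <= |y - y'|; hence y |-> S^y(1)
   is continuous, and it is the only continuous extension since Z is dense in Z_p. *)

From mathcomp Require Import all_boot all_order all_algebra.
From mathcomp Require Import reals.
From mathcomp Require Import ring lra.
From Stdlib Require Import ClassicalEpsilon FunctionalExtensionality.
Import Order.TTheory GRing.Theory Num.Theory.
Set Implicit Arguments. Unset Strict Implicit. Unset Printing Implicit Defensive.
Local Open Scope ring_scope.

(** * Binomial polynomials and Mahler coefficients *)

Section Binomials.
Variables (K : fieldType).
Hypothesis K0 : has_pchar0 K.

Definition ffact (x : K) k := \prod_(i < k) (x - i%:R).

Lemma natf_gt0_neq0 n : (0 < n)%N -> n%:R != 0 :> K.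
Proof. by move/pcharf0P: K0 => ->; rewrite -lt0n. Qed.

Lemma fact_neq0 n : n`!%:R != 0 :> K.
Proof. exact/natf_gt0_neq0/fact_gt0. Qed.

Lemma ffactS (x : K) k : ffact x k.+1 = ffact x k * (x - k%:R).
Proof. by rewrite /ffact big_ord_recr. Qed.

Lemma ffactS_addr1 (x : K) k : ffact (x + 1) k.+1 = (x + 1) * ffact x k.
Proof.
rewrite /ffact big_ord_recl /= subr0; congr (_ * _); apply: eq_bigr => i _.
by rewrite /bump /= add1n -natr1; ring.
Qed.

Lemma ffact_binom (x : K) k : ffact x k = k`!%:R * binom x k.
Proof. by rewrite /binom mulrC divfK ?fact_neq0. Qed.

Lemma binom0 (x : K) : binom x 0 = 1.
Proof. by rewrite /binom big_ord0 fact0 divr1. Qed.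

Lemma binom1 (x : K) : binom x 1 = x.
Proof. by rewrite /binom big_ord1 (_ : 1`! = 1)%N // divr1 subr0. Qed.

Lemma binomS_addr1 (x : K) k : binom (x + 1) k.+1 = binom x k.+1 + binom x k.
Proof.
rewrite /binom -!/(ffact _ _) ffactS_addr1 ffactS factS natrM.
have := fact_neq0 k; have : k.+1%:R != 0 :> K by exact: natf_gt0_neq0.
rewrite -natr1 => h1 h2; field; by rewrite h1 h2.
Qed.

Lemma binomS_subr1 (y : K) k : binom y k.+1 = binom (y - 1) k.+1 + binom (y - 1) k.
Proof. by rewrite -binomS_addr1 subrK. Qed.

Lemma binom_natr_small k n : (k < n)%N -> binom (k%:R : K) n = 0.
Proof.
by move=> kn; rewrite /binom (bigD1 (Ordinal kn)) //= subrr !mul0r.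
Qed.

Lemma binomN1 k : binom (-1 : K) k = (-1) ^+ k.
Proof.
elim: k => [|k IH]; first by rewrite binom0 expr0.
have := binomS_addr1 (-1) k; rewrite addNr (binom_natr_small (k := 0)) // IH.
by move/eqP; rewrite eq_sym addr_eq0 exprS mulN1r => /eqP.
Qed.

Definition mahler_diff (g : nat -> K) n :=
  \sum_(k < n.+1) (-1) ^+ (n - k) * 'C(n, k)%:R * g k.

Definition mahler_partial (c : nat -> K) k := \sum_(i < k.+1) c i * binom (k%:R : K) i.

Lemma mahler_diffB g h n :
  mahler_diff (fun k => g k - h k) n = mahler_diff g n - mahler_diff h n.
Proof. by rewrite /mahler_diff -sumrB; apply: eq_bigr => i _; ring. Qed.

Lemma mahler_diffS g n :
  mahler_diff g n.+1 = mahler_diff (fun k => g k.+1) n - mahler_diff g n.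
Proof.
set S := \sum_(i < n.+1) (-1) ^+ (n - i) * 'C(n, i.+1)%:R * g i.+1.
set T := \sum_(i < n) (-1) ^+ (n - i.+1) * 'C(n, i.+1)%:R * g i.+1.
have splitS : mahler_diff g n.+1 = (-1) ^+ n.+1 * g 0%N + mahler_diff (fun k => g k.+1) n + S.
  rewrite /mahler_diff big_ord_recl /= subn0 bin0 mulr1 -addrA; congr (_ + _).
  rewrite /S -big_split /=; apply: eq_bigr => i _.
  by rewrite /bump /= add1n subSS binS natrD; ring.
have split0 : mahler_diff g n = (-1) ^+ n * g 0%N + T.
  by rewrite /mahler_diff big_ord_recl /= subn0 bin0 mulr1.
have S_opp : S = - T.
  rewrite /S big_ord_recr /= bin_small // mulr0 mul0r addr0 /T -sumrN.
  apply: eq_bigr => i _; rewrite -[(n - i)%N](subnSK (ltn_ord i)) exprS; ring.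
rewrite splitS split0 S_opp exprS; ring.
Qed.

Lemma mahler_partialS c k :
  mahler_partial c k.+1 - mahler_partial c k = mahler_partial (fun i => c i.+1) k.
Proof.
set U := \sum_(i < k) c i.+1 * binom (k%:R : K) i.+1.
have splitS : mahler_partial c k.+1 = c 0%N + U + mahler_partial (fun i => c i.+1) k.
  rewrite /mahler_partial big_ord_recl /= binom0 mulr1 -addrA; congr (_ + _).
  under eq_bigr => i _ do rewrite /bump /= add1n -natr1 binomS_addr1 mulrDr.
  by rewrite big_split /= big_ord_recr /= binom_natr_small // mulr0 addr0.
have split0 : mahler_partial c k = c 0%N + U.
  by rewrite /mahler_partial big_ord_recl /= binom0 mulr1.
rewrite splitS split0; ring.
Qed.

Lemma mahler_diff_partial c n : mahler_diff (mahler_partial c) n = c n.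
Proof.
elim: n c => [|n IH] c.
  by rewrite /mahler_diff big_ord1 /mahler_partial big_ord1 binom0 expr0 bin0 !mul1r mulr1.
rewrite mahler_diffS -mahler_diffB -(IH (fun i => c i.+1)).
by apply: eq_bigr => i _; rewrite mahler_partialS.
Qed.

(* [Scoef y], [omx_coef] are the Mahler coefficients of S^y(1) and of 1 - x, and
   [bconv] is the convolution [conv] at the level of Mahler coefficients. *)
Definition Scoef (y : K) n := (-1) ^+ n * n`!%:R * binom y n.
Definition omx_coef (n : nat) : K := if n == 0%N then 1 else if n == 1%N then -1 else 0.
Definition bconv (a b : nat -> K) n := \sum_(k < n.+1) 'C(n, k)%:R * a k * b (n - k)%N.

Lemma bconv_omx0 b : bconv omx_coef b 0 = b 0%N.
Proof. by rewrite /bconv big_ord1 /= bin0 /omx_coef /= !mul1r. Qed.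

Lemma bconv_omxS b n : bconv omx_coef b n.+1 = b n.+1 - n.+1%:R * b n.
Proof.
rewrite /bconv big_ord_recl big_ord_recl /= big1 ?addr0.
  by rewrite bin0 bin1 subn0 subn1 /= /omx_coef /=; ring.
by move=> i _; rewrite /omx_coef /bump /=; ring.
Qed.

Lemma bconv_omx_inj a b : (forall n, bconv omx_coef a n = bconv omx_coef b n) -> a = b.
Proof.
move=> ab; apply: functional_extensionality; elim=> [|n IH].
  by have := ab 0%N; rewrite !bconv_omx0.
by have := ab n.+1; rewrite !bconv_omxS IH => /addIr.
Qed.

Lemma bconv_omx_Scoef y n : bconv omx_coef (Scoef y) n = Scoef (y + 1) n.
Proof.
case: n => [|n]; first by rewrite bconv_omx0 /Scoef !binom0.
rewrite bconv_omxS /Scoef binomS_addr1 factS natrM exprS; ring.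
Qed.

Lemma alt_sum_binom (y : K) k :
  \sum_(i < k.+1) (-1) ^+ i * binom y i = (-1) ^+ k * binom (y - 1) k.
Proof.
elim: k => [|k IH]; first by rewrite big_ord1 /= !binom0.
rewrite big_ord_recr /= IH binomS_subr1 exprS; ring.
Qed.

Lemma bconv_ScoefN1 y n : bconv (Scoef (-1)) (Scoef y) n = Scoef (y - 1) n.
Proof.
have termE (k : 'I_n.+1) : 'C(n, k)%:R * Scoef (-1) k * Scoef y (n - k)
    = n`!%:R * ((-1) ^+ (n - k) * binom y (n - k)) :> K.
  have kn : (k <= n)%N by rewrite -ltnS.
  rewrite /Scoef binomN1 -(bin_fact kn) !natrM.
  have -> : ((-1) ^+ k * k`!%:R * (-1) ^+ k : K) = k`!%:R * ((-1) ^+ k * (-1) ^+ k) by ring.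
  rewrite -exprD -signr_odd oddD addbb expr0; ring.
rewrite /bconv (eq_bigr _ (fun k _ => termE k)) -mulr_sumr (reindex_inj rev_ord_inj) /=.
rewrite (eq_bigr (fun j : 'I_n.+1 => (-1) ^+ j * binom y j)); last first.
  by move=> j _; rewrite subSS subKn // -ltnS.
by rewrite alt_sum_binom /Scoef; ring.
Qed.

End Binomials.

Arguments omx_coef {K}.

(** * Ultrametric absolute values and series *)

Section Valuation.
Variables (R : realType) (K : fieldType) (v : K -> R).
Hypothesis v_abs : is_abs v.

Lemma absv_ge0 x : 0 <= v x. Proof. by case: v_abs. Qed.
Lemma absvM x y : v (x * y) = v x * v y. Proof. by case: v_abs. Qed.
Lemma absv_eq0 x : v x = 0 <-> x = 0. Proof. by case: v_abs. Qed.
Lemma absv0 : v 0 = 0. Proof. exact/absv_eq0. Qed.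

Lemma absv_gt0 x : x != 0 -> 0 < v x.
Proof. by move=> x0; rewrite lt_def absv_ge0 andbT; apply: contra x0 => /eqP/absv_eq0->. Qed.

Lemma absv1 : v 1 = 1.
Proof.
have v10 : v 1 != 0 by rewrite gt_eqF ?absv_gt0 ?oner_neq0.
by apply: (mulfI v10); rewrite -absvM !mulr1.
Qed.

Lemma absvN1 : v (-1) = 1.
Proof.
have : v (-1) ^+ 2 = 1 by rewrite expr2 -absvM mulrNN mulr1 absv1.
by move/eqP; rewrite sqrf_eq1 => /orP [/eqP //|/eqP h]; have := absv_ge0 (-1); rewrite h; lra.
Qed.

Lemma absvN x : v (- x) = v x. Proof. by rewrite -mulN1r absvM absvN1 mul1r. Qed.
Lemma absv_distC x y : v (x - y) = v (y - x). Proof. by rewrite -absvN opprB. Qed.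

Lemma absvX x n : v (x ^+ n) = v x ^+ n.
Proof. by elim: n => [|n IH]; rewrite ?absv1 // !exprS absvM IH. Qed.

Lemma absv_sign n : v ((-1) ^+ n) = 1. Proof. by rewrite absvX absvN1 expr1n. Qed.

Lemma absvV x : v x^-1 = (v x)^-1.
Proof.
have [->|x0] := eqVneq x 0; first by rewrite invr0 absv0 invr0.
by apply: (mulfI (lt0r_neq0 (absv_gt0 x0))); rewrite -absvM !mulfV ?absv1 // lt0r_neq0 ?absv_gt0.
Qed.

Lemma absv_small_eq0 x : (forall e, 0 < e -> v x <= e) -> x = 0.
Proof.
move=> small; apply/absv_eq0/eqP; rewrite eq_le absv_ge0 andbT.
by apply/ler_addgt0Pr => e e0; rewrite add0r small.
Qed.

Hypothesis v_na : nonarch v.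

Lemma absvD_le x y B : v x <= B -> v y <= B -> v (x + y) <= B.
Proof. by move=> hx hy; apply: le_trans (v_na x y) _; rewrite ge_max hx hy. Qed.

Lemma absvD_lt x y B : v x < B -> v y < B -> v (x + y) < B.
Proof. by move=> hx hy; apply: le_lt_trans (v_na x y) _; rewrite gt_max hx hy. Qed.

Lemma absv_sum_lt I (r : seq I) (P : pred I) (a : I -> K) e : 0 < e ->
  (forall i, P i -> v (a i) < e) -> v (\sum_(i <- r | P i) a i) < e.
Proof.
move=> e0 ha; apply: (big_ind (fun x => v x < e)) => //; first by rewrite absv0.
by move=> x y; apply: absvD_lt.
Qed.

Lemma absv_sum_le I (r : seq I) (P : pred I) (a : I -> K) B : 0 <= B ->
  (forall i, P i -> v (a i) <= B) -> v (\sum_(i <- r | P i) a i) <= B.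
Proof.
move=> B0 ha; apply: (big_ind (fun x => v x <= B)) => //; first by rewrite absv0.
by move=> x y; apply: absvD_le.
Qed.

Lemma absv_natr_le1 n : v n%:R <= 1.
Proof.
rewrite -[n]card_ord -sumr_const; apply: absv_sum_le => // _ _; by rewrite absv1.
Qed.

Lemma absv_intr_le1 (z : int) : v z%:~R <= 1.
Proof. by case: z => n; rewrite ?NegzE ?mulrNz ?absvN absv_natr_le1. Qed.

Lemma has_sum_unique (a : nat -> K) s t : has_sum v a s -> has_sum v a t -> s = t.
Proof.
move=> hs ht; apply/subr0_eq/absv_small_eq0 => e e0.
have [N1 h1] := hs e e0; have [N2 h2] := ht e e0.
set S := \sum_(k < maxn N1 N2) a k.
have -> : s - t = (S - t) - (S - s) by ring.
by apply/ltW/absvD_lt; rewrite ?absvN (h1, h2) // (leq_maxl, leq_maxr).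
Qed.

Lemma ksum_has_sum (a : nat -> K) : (exists s, has_sum v a s) -> has_sum v a (ksum v a).
Proof. exact: epsilon_spec. Qed.

Lemma ksum_eq (a : nat -> K) s : has_sum v a s -> ksum v a = s.
Proof. by move=> hs; apply: has_sum_unique (ksum_has_sum (ex_intro _ s hs)) hs. Qed.

Lemma ksum_fin (a : nat -> K) N :
  (forall k, (N <= k)%N -> a k = 0) -> ksum v a = \sum_(k < N) a k.
Proof.
move=> a0; apply: ksum_eq => e e0; exists N => n Nn.
have tail0 : \sum_(i < n - N) a (N + i)%N = 0 by apply: big1 => i _; rewrite a0 ?leq_addr.
by rewrite -(subnKC Nn) big_split_ord /= tail0 addr0 subrr absv0.
Qed.

Lemma has_sumB (a b : nat -> K) s t : has_sum v a s -> has_sum v b t ->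
  has_sum v (fun k => a k - b k) (s - t).
Proof.
move=> ha hb e e0; have [N1 h1] := ha e e0; have [N2 h2] := hb e e0.
exists (maxn N1 N2) => n; rewrite geq_max => /andP [n1 n2]; rewrite sumrB.
have -> : \sum_(i < n) a i - \sum_(i < n) b i - (s - t) =
  (\sum_(i < n) a i - s) + (- (\sum_(i < n) b i - t)) by ring.
by apply: absvD_lt; rewrite ?absvN (h1, h2).
Qed.

Lemma has_sum_le (a : nat -> K) s B : has_sum v a s -> (forall k, v (a k) <= B) ->
  v s <= B.
Proof.
move=> hs aB; have B0 : 0 <= B by apply: le_trans (aB 0%N); apply: absv_ge0.
apply/ler_addgt0Pr => e e0; have [N hN] := hs e e0.
have sumB : v (\sum_(k < N) a k) <= B by apply: absv_sum_le.
have -> : s = \sum_(k < N) a k + (- (\sum_(k < N) a k - s)) by ring.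
apply: absvD_le; first by apply: le_trans sumB _; rewrite lerDl ltW.
by rewrite absvN; apply: ltW; apply: lt_le_trans (hN N (leqnn N)) _; rewrite lerDr.
Qed.

Lemma has_sum_cvg0 (a : nat -> K) : complete v ->
  (forall e, 0 < e -> exists N, forall k, (N <= k)%N -> v (a k) < e) ->
  exists s, has_sum v a s.
Proof.
move=> v_complete a0; apply: v_complete => e e0; have [N hN] := a0 e e0.
have tail m n : (N <= n)%N -> (n <= m)%N -> v (\sum_(k < m) a k - \sum_(k < n) a k) < e.
  move=> Nn nm; rewrite -!(big_mkord xpredT) (big_cat_nat (leq0n n) nm) /= addrC addrK.
  by rewrite big_nat_cond; apply: absv_sum_lt => // k /andP [/andP [nk _] _]; apply/hN/(leq_trans Nn).
exists N => m n Nm Nn; case: (leqP n m) => nm; first exact: tail.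
by rewrite absv_distC; apply: tail => //; apply: ltnW.
Qed.

(** * Residue characteristic p and integrality on Z_p *)

Variable p : nat.
Hypotheses (p_prime : prime p) (absv_p : v p%:R = p%:R^-1).

Lemma absv_p_gt0 : 0 < v p%:R.
Proof. by rewrite absv_p invr_gt0 ltr0n prime_gt0. Qed.

Lemma absv_p_lt1 : v p%:R < 1.
Proof. by rewrite absv_p invf_lt1 ?ltr1n ?prime_gt1 // ltr0n prime_gt0. Qed.

Lemma absv_char0 : has_pchar0 K.
Proof.
apply/pcharf0P => n; apply/idP/idP => [n0|/eqP-> //]; apply: contraT; rewrite -lt0n => n_gt0.
have [q qchar] := natf0_pchar n_gt0 n0.
have q0 : q%:R = 0 :> K := pcharf0 qchar.
have [qp|qp] := eqVneq q p.
  by have := absv_p_gt0; rewrite -qp q0 absv0 ltxx.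
have cop : coprime q p by rewrite prime_coprime ?dvdn_prime2 ?(pcharf_prime qchar) // eq_sym.
(* a Bezout relation k q = l p + 1 gives l p = -1 in K, against v l <= 1 and v p < 1 *)
case: (egcdnP p (prime_gt0 (pcharf_prime qchar))) => k l + _; rewrite (eqP cop) => bezout.
have : v (l%:R * p%:R) = 1.
  have : (k * q)%:R = (l * p + 1)%:R :> K by rewrite bezout.
  by rewrite natrD !natrM q0 mulr0 => /eqP; rewrite eq_sym addr_eq0 => /eqP->; rewrite absvN absv1.
rewrite absvM; have := absv_natr_le1 l; have := absv_p_lt1.
have := absv_ge0 l%:R; have := absv_ge0 p%:R; nra.
Qed.

Lemma absv_natr_gt0 n : (0 < n)%N -> 0 < v n%:R.
Proof. by move=> n0; apply/absv_gt0/(natf_gt0_neq0 absv_char0). Qed.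

Lemma absv_fact_gt0 n : 0 < v n`!%:R.
Proof. exact/absv_natr_gt0/fact_gt0. Qed.

Lemma absv_fact_le n : v n`!%:R <= v p%:R ^+ (n %/ p).
Proof.
elim: n => [|n IH]; first by rewrite div0n expr0 absv1.
rewrite factS natrM absvM divnS ?prime_gt0 //.
have h0 := absv_ge0 n.+1%:R; have h1 := absv_ge0 n`!%:R.
case: (boolP (p %| n.+1)%N) => [pn|_] /=.
  rewrite add1n exprS; apply: ler_pM => //; case/dvdnP: pn => m ->.
  by rewrite natrM absvM ler_piMl ?absv_ge0 ?absv_natr_le1.
by rewrite add0n -[X in _ <= X]mul1r; apply: ler_pM => //; apply: absv_natr_le1.
Qed.

Lemma absv_fact_cvg0 e : 0 < e -> exists N, forall k, (N <= k)%N -> v k`!%:R < e.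
Proof.
move=> e0; set j := Num.Def.archi_bound e^-1.
have hj : e^-1 < j%:R by apply: archi_boundP; rewrite invr_ge0 ltW.
exists (j * p)%N => k hk; apply: le_lt_trans (absv_fact_le k) _.
have jk : (j <= k %/ p)%N by rewrite leq_divRL ?prime_gt0.
have q0 := absv_p_gt0; have q1 := absv_p_lt1.
(* v p ^+ j = p^-j < 1/j < e *)
have pj_lt : v p%:R ^+ j < e.
  rewrite absv_p exprVn -natrX invf_plt ?posrE ?ltr0n ?expn_gt0 ?prime_gt0 //.
  by apply: lt_trans hj _; rewrite ltr_nat ltn_expl ?prime_gt1.
apply: le_lt_trans _ pj_lt; rewrite -[(k %/ p)%N](subnKC jk) exprD.
rewrite -[X in _ <= X]mulr1 ler_wpM2l ?exprn_ge0 ?exprn_ile1 ?ltW //.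
Qed.

Let K_char0 := absv_char0.

Lemma isZp_intr (z : int) : isZp v z%:~R.
Proof. by move=> e e0; exists z; rewrite subrr absv0. Qed.

Lemma isZp_le1 x : isZp v x -> v x <= 1.
Proof.
move=> /(_ 1 ltr01) [z xz]; rewrite -(subrK z%:~R x).
by apply: absvD_le; [apply: ltW | apply: absv_intr_le1].
Qed.

Lemma absv_ffact_le1 x k : v x <= 1 -> v (ffact x k) <= 1.
Proof.
move=> x1; rewrite /ffact; elim/big_ind: _ => [|a b a1 b1|i _]; first by rewrite absv1.
  by rewrite absvM -[1]mulr1 ler_pM ?absv_ge0.
by apply: absvD_le; rewrite ?absvN ?absv_natr_le1.
Qed.

Lemma absv_ffactB_le x y k : v x <= 1 -> v y <= 1 ->
  v (ffact x k - ffact y k) <= v (x - y).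
Proof.
move=> x1 y1; elim: k => [|k IH]; first by rewrite /ffact !big_ord0 subrr absv0 absv_ge0.
rewrite !ffactS.
have -> : ffact x k * (x - k%:R) - ffact y k * (y - k%:R)
   = ffact x k * (x - y) + (ffact x k - ffact y k) * (y - k%:R) by ring.
have yk1 : v (y - k%:R) <= 1 by apply: absvD_le; rewrite ?absvN ?absv_natr_le1.
apply: absvD_le; rewrite absvM.
  by rewrite ler_piMl ?absv_ge0 ?absv_ffact_le1.
by apply: le_trans IH; rewrite ler_piMr ?absv_ge0.
Qed.

Lemma binom_natr_le1 n k : v (binom n%:R k) <= 1.
Proof.
elim: n k => [|n IH] [|k]; rewrite ?binom0 ?absv1 //.
  by rewrite binom_natr_small ?absv0.
by rewrite -natr1 binomS_addr1 //; apply: absvD_le.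
Qed.

Lemma binom_Nnatr_le1 n k : v (binom (- n%:R) k) <= 1.
Proof.
elim: n k => [|n IH] k; first by rewrite oppr0; apply: (binom_natr_le1 0).
elim: k => [|k IHk]; first by rewrite binom0 absv1.
have := binomS_subr1 K_char0 (- n%:R) k.
rewrite -opprD natr1 => /eqP; rewrite -subr_eq => /eqP <-.
by apply: absvD_le; rewrite ?absvN ?IH.
Qed.

Lemma binom_intr_le1 (z : int) k : v (binom z%:~R k) <= 1.
Proof. by case: z => n; rewrite ?NegzE ?mulrNz ?binom_natr_le1 ?binom_Nnatr_le1. Qed.

(* Approximating x by an integer z with v (x - z) < v k!, the difference
   binom x k - binom z k = (ffact x k - ffact z k) / k! has absolute value < 1. *)
Lemma binom_Zp_le1 x k : isZp v x -> v (binom x k) <= 1.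
Proof.
move=> xZp; have [z xz] := xZp _ (absv_fact_gt0 k).
have -> : binom x k = (ffact x k - ffact z%:~R k) / k`!%:R + binom z%:~R k.
  by rewrite /binom -!/(ffact _ _); ring.
apply: absvD_le; last exact: binom_intr_le1.
rewrite absvM absvV ler_pdivrMr ?absv_fact_gt0 // mul1r; apply/ltW/(le_lt_trans _ xz).
by apply: absv_ffactB_le; [apply: isZp_le1 | apply: absv_intr_le1].
Qed.

Lemma contmap_eq_intr (F G : K -> K -> K) : contmap v F -> contmap v G ->
  (forall (m : int) x, isZp v x -> F m%:~R x = G m%:~R x) ->
  forall y x, isZp v y -> isZp v x -> F y x = G y x.
Proof.
move=> Fc Gc FG y x yZp xZp; apply/subr0_eq/absv_small_eq0 => e e0.
have [dF dF0 hF] := Fc y e yZp e0; have [dG dG0 hG] := Gc y e yZp e0.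
have d0 : 0 < Num.min dF dG by rewrite lt_min dF0 dG0.
have [z] := yZp _ d0; rewrite absv_distC lt_min => /andP [zF zG].
have -> : F y x - G y x = - (F z%:~R x - F y x) + (G z%:~R x - G y x).
  by rewrite FG //; ring.
by apply: absvD_le; rewrite ?absvN; [apply: hF zF _ xZp | apply: hG zG _ xZp]; apply: isZp_intr.
Qed.

(** * The family S^y(1) *)

Hypothesis v_complete : complete v.

Lemma absv_S_term_one_le y x k : isZp v y -> isZp v x ->
  v (S_term y (@cst_one K) x k) <= v k`!%:R.
Proof.
move=> yZp xZp; rewrite /S_term /cst_one mulr1 -mulrA.
move: (binom y k) (binom x k) (binom_Zp_le1 k yZp) (binom_Zp_le1 k xZp) => b_y bx by1 bx1.
rewrite !absvM absv_sign mul1r; apply: ler_piMr; first exact: absv_ge0.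
by apply: mulr_ile1; rewrite ?absv_ge0.
Qed.

Lemma Sop_one_has_sum y x : isZp v y -> isZp v x ->
  has_sum v (S_term y (@cst_one K) x) (Sop v y (@cst_one K) x).
Proof.
move=> yZp xZp; apply/ksum_has_sum/has_sum_cvg0 => // e e0.
have [N hN] := absv_fact_cvg0 e0; exists N => k Nk.
exact: le_lt_trans (absv_S_term_one_le k yZp xZp) (hN k Nk).
Qed.

Lemma Sop_one_sym y x : Sop v y (@cst_one K) x = Sop v x (@cst_one K) y.
Proof. by rewrite /Sop; congr ksum; apply: functional_extensionality => k; rewrite /S_term; ring. Qed.

Lemma Sop_one_lipschitz y y' x : isZp v y -> isZp v y' -> isZp v x ->
  v (Sop v y (@cst_one K) x - Sop v y' (@cst_one K) x) <= v (y - y').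
Proof.
move=> yZp y'Zp xZp.
apply: has_sum_le (has_sumB (Sop_one_has_sum yZp xZp) (Sop_one_has_sum y'Zp xZp)) _ => k.
have -> : S_term y (@cst_one K) x k - S_term y' (@cst_one K) x k
    = (-1) ^+ k * (ffact y k - ffact y' k) * binom x k.
  by rewrite /S_term /cst_one !ffact_binom //; ring.
move: (binom x k) (binom_Zp_le1 k xZp) => bx bx1.
rewrite !absvM absv_sign mul1r; apply: le_trans (ler_piMr (absv_ge0 _) bx1) _.
by apply: absv_ffactB_le; apply: isZp_le1.
Qed.

Lemma Sop_one_contZp y : isZp v y -> contZp v (Sop v y (@cst_one K)).
Proof.
move=> yZp x e xZp e0; exists e => // x' x'Zp x'x.
by rewrite Sop_one_sym [Sop v y _ x]Sop_one_sym; apply: le_lt_trans (Sop_one_lipschitz _ _ _) x'x.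
Qed.

Lemma Sop_one_contmap : contmap v (fun y => Sop v y (@cst_one K)).
Proof.
move=> y0 e y0Zp e0; exists e => // y yZp yy0 x xZp.
exact/ltW/(le_lt_trans (Sop_one_lipschitz yZp y0Zp xZp) yy0).
Qed.

Lemma Sop_one_mahler y : Sop v y (@cst_one K) = mahler_fun v (Scoef y).
Proof.
apply: functional_extensionality => x; rewrite /Sop /mahler_fun; congr ksum.
by apply: functional_extensionality => k; rewrite /S_term /cst_one /Scoef mulr1.
Qed.

Lemma mahler_fun_natr c k : mahler_fun v c k%:R = mahler_partial c k.
Proof.
by rewrite /mahler_fun (ksum_fin (N := k.+1)) // => n kn; rewrite binom_natr_small ?mulr0.
Qed.

Lemma mcoef_eq_natr (f g : K -> K) n : (forall k, f k%:R = g k%:R) -> mcoef f n = mcoef g n.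
Proof. by move=> fg; apply: eq_bigr => i _; rewrite fg. Qed.

Lemma mcoef_mahler_fun c : mcoef (mahler_fun v c) = c.
Proof.
apply: functional_extensionality => n; rewrite -[RHS](mahler_diff_partial K_char0 c n).
by apply: eq_bigr => i _; rewrite mahler_fun_natr.
Qed.

Lemma mcoef_conv phi psi : mcoef (conv v phi psi) = bconv (mcoef phi) (mcoef psi).
Proof. exact: mcoef_mahler_fun. Qed.

Lemma conv_mahler_fun phi c :
  conv v phi (mahler_fun v c) = mahler_fun v (bconv (mcoef phi) c).
Proof. by rewrite /conv mcoef_mahler_fun. Qed.

Lemma cst_one_mahler : @cst_one K = mahler_fun v (Scoef 0).
Proof.
apply: functional_extensionality => x; rewrite /mahler_fun (ksum_fin (N := 1)).
  by rewrite big_ord1 /Scoef !binom0 expr0 fact0 !mulr1.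
by case=> // n _; rewrite /Scoef [binom 0 _](binom_natr_small _ (ltn0Sn n)) mulr0 mul0r.
Qed.

Lemma one_minus_x_mahler : @one_minus_x K = mahler_fun v omx_coef.
Proof.
apply: functional_extensionality => x; rewrite /mahler_fun (ksum_fin (N := 2)).
  by rewrite big_ord_recr big_ord1 /= binom0 binom1 /one_minus_x /cst_one /id_fun /omx_coef /=; ring.
by case=> [|[|n]] // _; rewrite /omx_coef mul0r.
Qed.

Lemma mcoef_one_minus_x : mcoef (@one_minus_x K) = omx_coef.
Proof. by rewrite one_minus_x_mahler mcoef_mahler_fun. Qed.

Lemma iter_conv_one_minus_x n :
  iter n (conv v (@one_minus_x K)) (@cst_one K) = mahler_fun v (Scoef n%:R).
Proof.
elim: n => [|n IH]; first exact: cst_one_mahler.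
rewrite iterS IH conv_mahler_fun -natr1; congr mahler_fun.
apply: functional_extensionality => k.
by rewrite -bconv_omx_Scoef // mcoef_one_minus_x.
Qed.

Lemma conv_one_minus_x_SopN1 : conv v (@one_minus_x K) (Sop v (-1) (@cst_one K)) = @cst_one K.
Proof.
rewrite Sop_one_mahler conv_mahler_fun mcoef_one_minus_x cst_one_mahler; congr mahler_fun.
by apply: functional_extensionality => n; rewrite bconv_omx_Scoef // addNr.
Qed.

Lemma star_inv_one_minus_x_spec :
  contZp v (star_inv v (@one_minus_x K)) /\
  forall x, isZp v x -> conv v (@one_minus_x K) (star_inv v (@one_minus_x K)) x = cst_one x.
Proof.
have inv_exists : exists psi, contZp v psi /\
    forall x, isZp v x -> conv v (@one_minus_x K) psi x = cst_one x.
  exists (Sop v (-1) (@cst_one K)); split.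
    by apply: Sop_one_contZp; rewrite -(mulrNz 1 1); apply: isZp_intr.
  by move=> x _; rewrite conv_one_minus_x_SopN1.
exact: (epsilon_spec _ _ inv_exists).
Qed.

(* The star-inverse is only specified on Z_p, which its Mahler coefficients see
   through the naturals alone; this pins them down. *)
Lemma mcoef_star_inv : mcoef (star_inv v (@one_minus_x K)) = Scoef (-1).
Proof.
apply: bconv_omx_inj => n; rewrite bconv_omx_Scoef // addNr -mcoef_one_minus_x -mcoef_conv.
rewrite -[Scoef 0]mcoef_mahler_fun -cst_one_mahler; apply: mcoef_eq_natr => k.
by rewrite (proj2 star_inv_one_minus_x_spec) //; apply: (isZp_intr k).
Qed.

Lemma iter_conv_star_inv j :
  iter j (conv v (star_inv v (@one_minus_x K))) (@cst_one K) = mahler_fun v (Scoef (- j%:R)).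
Proof.
elim: j => [|j IH]; first by rewrite oppr0; exact: cst_one_mahler.
rewrite iterS IH conv_mahler_fun mcoef_star_inv; congr mahler_fun.
apply: functional_extensionality => k.
by rewrite bconv_ScoefN1 // -natr1 opprD.
Qed.

Lemma Sop_one_star_pow (m : int) : Sop v m%:~R (@cst_one K) = star_pow v (@one_minus_x K) m.
Proof.
rewrite Sop_one_mahler; case: m => n; first by rewrite /star_pow iter_conv_one_minus_x.
by rewrite /star_pow iter_conv_star_inv NegzE mulrNz.
Qed.

End Valuation.

Theorem proposition6p6 (R : realType) (K : closedFieldType) (v : K -> R) (p : nat) :
  prime p -> is_abs v -> nonarch v -> complete v -> alg_dense v ->
  v p%:R = (p%:R)^-1 ->
  (forall y x, isZp v y -> isZp v x -> has_sum v (S_term y (@cst_one K) x) (Sop v y (@cst_one K) x)) /\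
  (forall y, isZp v y -> contZp v (Sop v y (@cst_one K))) /\
  contmap v (fun y => Sop v y (@cst_one K)) /\
  (forall (m : int) x, isZp v x ->
     Sop v m%:~R (@cst_one K) x = star_pow v (@one_minus_x K) m x) /\
  (forall F : K -> K -> K,
     (forall y, isZp v y -> contZp v (F y)) -> contmap v F ->
     (forall (m : int) x, isZp v x -> F m%:~R x = star_pow v (@one_minus_x K) m x) ->
     forall y x, isZp v y -> isZp v x -> F y x = Sop v y (@cst_one K) x).
Proof.
move=> p_prime v_abs v_na v_complete _ absv_p.
have Sop_pow := Sop_one_star_pow v_abs v_na p_prime absv_p v_complete.
have Sop_cont := Sop_one_contmap v_abs v_na p_prime absv_p v_complete.
split; first by move=> y x; exact: (Sop_one_has_sum v_abs v_na p_prime absv_p v_complete).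
split; first by move=> y; exact: (Sop_one_contZp v_abs v_na p_prime absv_p v_complete).
split; first exact: Sop_cont.
split; first by move=> m x _; rewrite Sop_pow.
move=> F _ F_cont F_pow y x; apply: (contmap_eq_intr v_abs v_na F_cont Sop_cont) => m z zZp.
by rewrite F_pow // Sop_pow.
Qed.
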